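(* Let $n\ge1$ and $d\ge0$. The set $\mathcal D_{d,n}$ of admissible pairs is a doset on $\mathcal P_{d,n}$, and the poset $\mathcal P_{d,n}$ is a distributive lattice.
   Context: $\langle n\rangle=\{\bar n<\dots<\bar1<1<\dots<n\}$ with $\bar\imath=-i$; $\binom{\langle n\rangle}{n}$ is the set of $n$-element subsets $\alpha=\{\alpha_1<\dots<\alpha_n\}$ of $\langle n\rangle$. Let $\binom{\langle n\rangle}{n}_d:=\{\alpha^{(a)}\mid\alpha\in\binom{\langle n\rangle}{n},\ 0\le a\le d\}$, partially ordered by $\alpha^{(a)}\le\beta^{(b)}$ iff $a\le b$ and $\alpha_i\le\beta_{b-a+i}$ for $i=1,\dots,n-b+a$. An element $\alpha\in\binom{\langle n\rangle}{n}$ is admissible if for each $i\in[n]$ exactly one of $i,\bar\imath$ lies in $\alpha$; $\mathcal P_{d,n}$ is the subposet of $\binom{\langle n\rangle}{n}_d$ consisting of the $\alpha^{(a)}$ with $\alpha$ admissible. A cover $\alpha^{(a)}\lessdot\beta^{(a)}$ in $\mathcal P_{d,n}$ is of type (1) if $\alpha$ and $\beta$ have the same number of negative elements. A pair $(\alpha^{(a)},\beta^{(a)})$ with $\alpha^{(a)}<\beta^{(a)}$ is admissible if there is a saturated chain $\alpha^{(a)}=\gamma_0\lessdot\gamma_1\lessdot\dots\lessdot\gamma_s=\beta^{(a)}$ in $\mathcal P_{d,n}$ all of whose covers are of type (1); $\mathcal D_{d,n}$ consists of the admissible pairs together with the diagonal pairs $(\alpha^{(a)},\alpha^{(a)})$.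 A doset on a poset $\mathcal P$ is a set $\mathcal D$ with $\Delta_{\mathcal P}\subseteq\mathcal D\subseteq\{(x,y)\in\mathcal P\times\mathcal P\mid x\le y\}$ such that whenever $x\le y\le z$, $(x,z)\in\mathcal D$ iff both $(x,y)\in\mathcal D$ and $(y,z)\in\mathcal D$. *)

From mathcomp Require Import all_boot all_order all_algebra.
Set Implicit Arguments. Unset Strict Implicit. Unset Printing Implicit Defensive.
Import Order.TTheory GRing.Theory Num.Theory.

(* <n> = {nbar < ... < 1bar < 1 < ... < n} is encoded by 'I_(2*n) via the
   order-preserving bijection bval: j < n |-> -(n - j),  j >= n |-> j - n + 1. *)
Definition bval (n : nat) (j : 'I_(2 * n)) : int :=
  if (j < n)%N then (- Posz (n - j))%R else Posz (j - n).+1.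

(* alpha_i (1-indexed): the i-th smallest element of A, as an integer *)
Definition sorted_vals (n : nat) (A : {set 'I_(2 * n)}) : seq int :=
  sort (fun x y : int => (x <= y)%R) [seq bval x | x in A].
Definition comp (n : nat) (A : {set 'I_(2 * n)}) (i : nat) : int :=
  nth 0%R (sorted_vals A) i.-1.

Definition admissible (n : nat) (A : {set 'I_(2 * n)}) : bool :=
  [forall i : 'I_n,
    [exists j in A, bval j == Posz i.+1] (+) [exists j in A, bval j == (- Posz i.+1)%R]].

(* elements alpha^(a) of binom(<n>,n)_d are pairs (alpha, a), a : 'I_(d+1);
   the carrier also contains non-n-element sets, excluded by in_binom *)
Definition pelem (n d : nat) := ({set 'I_(2 * n)} * 'I_d.+1)%type.

Definition in_binom (n d : nat) (x : pelem n d) : bool := #|x.1| == n.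

Definition inP (n d : nat) (x : pelem n d) : bool := in_binom x && admissible x.1.

Definition le_bd (n d : nat) (x y : pelem n d) : bool :=
  (x.2 <= y.2)%N &&
  [forall i : 'I_n, ((i.+1 <= n - (y.2 - x.2))%N ==>
                    (comp x.1 i.+1 <= comp y.1 (y.2 - x.2 + i.+1))%R)].

Definition lt_bd (n d : nat) (x y : pelem n d) : bool := (x != y) && le_bd x y.

Definition cover_P (n d : nat) (x y : pelem n d) : bool :=
  [&& inP x, inP y, lt_bd x y & ~~ [exists z, [&& inP z, lt_bd x z & lt_bd z y]]].

Definition negcount (n : nat) (A : {set 'I_(2 * n)}) : nat :=
  #|[set j in A | (bval j < 0)%R]|.

Definition cover_type1 (n d : nat) (x y : pelem n d) : bool :=
  [&& cover_P x y, x.2 == y.2 & negcount x.1 == negcount y.1].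

Definition adm_pair (n d : nat) (x y : pelem n d) : Prop :=
  [&& inP x, inP y, x.2 == y.2 & lt_bd x y] /\
  exists s : seq (pelem n d), path (@cover_type1 n d) x s /\ last x s = y.

Definition Dset (n d : nat) (x y : pelem n d) : Prop :=
  (inP x /\ x = y) \/ adm_pair x y.

Definition is_doset (T : Type) (P : pred T) (le : rel T) (D : T -> T -> Prop) : Prop :=
  (forall x, P x -> D x x) /\
  (forall x y, D x y -> [/\ P x, P y & le x y]) /\
  (forall x y z, P x -> P y -> P z -> le x y -> le y z ->
     (D x z <-> D x y /\ D y z)).

Definition is_poset (T : Type) (P : pred T) (le : rel T) : Prop :=
  (forall x, P x -> le x x) /\
  (forall x y, P x -> P y -> le x y -> le y x -> x = y) /\
  (forall x y z, P x -> P y -> P z -> le x y -> le y z -> le x z).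

Definition is_distr_lattice (T : Type) (P : pred T) (le : rel T) : Prop :=
  is_poset P le /\
  exists meet join : T -> T -> T,
    (forall x y, P x -> P y ->
       [/\ P (meet x y), le (meet x y) x, le (meet x y) y &
           forall z, P z -> le z x -> le z y -> le z (meet x y)]) /\
    (forall x y, P x -> P y ->
       [/\ P (join x y), le x (join x y), le y (join x y) &
           forall z, P z -> le x z -> le y z -> le (join x y) z]) /\
    (forall x y z, P x -> P y -> P z ->
       meet x (join y z) = join (meet x y) (meet x z)).

From Pilot Require Import Defs.
From mathcomp Require Import all_boot all_order all_algebra zify.
Set Implicit Arguments. Unset Strict Implicit. Unset Printing Implicit Defensive.
Import Order.TTheory GRing.Theory Num.Theory.

(* Number the points of <n> by the positions 0, ..., 2n-1 and attach to alpha^(a)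
   its profile u |-> #{s in alpha | s < u} + (d - a) on [0, 2n].  Comparing sorted
   sequences through counting functions shows that alpha^(a) <= beta^(b) iff the
   profile of beta lies pointwise below that of alpha.  The profiles of elements of
   P_{d,n} are exactly the functions with 0/1 steps, total rise n, initial value at
   most d and the symmetry about n forced by admissibility; this class is closed under
   pointwise max and min, so P_{d,n} is a distributive lattice.  The profile values at
   0 and n, namely d - a and (number of negatives) + d - a, are antitone, preserved
   exactly by the covers of type (1), and constant on any interval whose endpoints
   share them.  So D_{d,n} is the set of pairs x <= y sharing these two values (any
   saturated chain joins them), and the doset axioms follow. *)

Section ShiftedDominance.
Variables (disp : Order.disp_t) (T : porderType disp) (x0 : T).
Local Open Scope order_scope.

Lemma nth_le_count (r : seq T) v j : sorted <=%O r -> (j < size r)%N ->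
  (nth x0 r j <= v) = (j < count (<= v)%O r)%N.
Proof.
elim: r j => [|x r IH] j //= r_sorted j_lt.
have x_min : all (fun y => x <= y) r by apply: order_path_min r_sorted; exact: le_trans.
have [x_le_v|x_nle_v] := boolP (x <= v).
  by case: j j_lt => [|j] j_lt //=; rewrite add1n ltnS IH //; apply: path_sorted r_sorted.
have count_le_v0 : count (<= v)%O r = 0%N.
  apply/eqP; rewrite -leqn0 leqNgt -has_count; apply/hasPn => y yr.
  by apply: contra x_nle_v => /(le_trans (allP x_min y yr)).
rewrite count_le_v0 /= ltn0; apply/negbTE; apply: contra x_nle_v.
case: j j_lt => [|j] //= j_lt; apply: le_trans; exact: (allP x_min) (mem_nth _ _).
Qed.

Variables (m t : nat) (s r : seq T).
Hypotheses (s_sorted : sorted <=%O s) (r_sorted : sorted <=%O r).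
Hypotheses (size_s : size s = m) (size_r : size r = m).

Lemma count_le_shift : (forall i, (i < m - t)%N -> nth x0 s i <= nth x0 r (t + i)) ->
  forall v, (count (<= v)%O r <= count (<= v)%O s + t)%N.
Proof.
move=> s_le_r v; set k := count _ r.
have k_le_m : (k <= m)%N by rewrite -size_r count_size.
have [|t_lt_k] := leqP k t; first by lia.
have r_le_v : nth x0 r (t + (k - t.+1)) <= v.
  by rewrite nth_le_count // ?size_r -/k; lia.
have := le_trans (s_le_r _ _) r_le_v; rewrite nth_le_count ?size_s; lia.
Qed.

Lemma nth_le_shift :
  (forall v, v \in r -> (count (<= v)%O r <= count (<= v)%O s + t)%N) ->
  forall i, (i < m - t)%N -> nth x0 s i <= nth x0 r (t + i).
Proof.
move=> count_r_le i i_lt; set v := nth x0 r (t + i).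
have v_in_r : v \in r by apply: mem_nth; rewrite size_r; lia.
have : (t + i < count (<= v)%O r)%N.
  by rewrite -nth_le_count ?lexx // size_r; lia.
move: (count_r_le v v_in_r); rewrite nth_le_count // ?size_s; lia.
Qed.

End ShiftedDominance.

Lemma ler_bval n (x y : 'I_(2 * n)) : (bval x <= bval y)%R = (x <= y)%N.
Proof. rewrite /bval; case: ifP => hx; case: ifP => hy; apply/idP/idP; lia. Qed.

Lemma bval_lt0 n (j : 'I_(2 * n)) : (bval j < 0)%R = (j < n)%N.
Proof. rewrite /bval; case: ifP => hx; apply/idP/idP; lia. Qed.

Lemma bval_eq_pos n (j : 'I_(2 * n)) i : (bval j == Posz i.+1) = (j == n + i :> nat).
Proof. rewrite /bval; case: ifP => hx; apply/eqP/eqP; lia. Qed.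

Lemma bval_eq_neg n (j : 'I_(2 * n)) i : (i < n)%N ->
  (bval j == - Posz i.+1)%R = (j == n - i.+1 :> nat).
Proof. move=> hi; rewrite /bval; case: ifP => hx; apply/eqP/eqP; lia. Qed.

Section Positions.
Variables (n : nat) (A : {set 'I_(2 * n)}).

Definition nbelow (u : nat) : nat := #|[set s in A | (s < u)%N]|.
Definition has_pos (m : nat) : bool := [exists j in A, nat_of_ord j == m].

Lemma has_posE (j : 'I_(2 * n)) : has_pos j = (j \in A).
Proof.
apply/existsP/idP => [[j' /andP [j'A /eqP /val_inj <-]] //|jA].
by exists j; rewrite jA eqxx.
Qed.

Lemma nbelow0 : nbelow 0 = 0.
Proof. by apply: eq_card0 => s; rewrite !inE ltn0 andbF. Qed.

Lemma nbelowS m : nbelow m.+1 = nbelow m + has_pos m.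
Proof.
rewrite /nbelow; have [/existsP [j /andP [jA /eqP jm]] | no_m] := boolP (has_pos m).
  rewrite (_ : [set s in A | _] = j |: [set s in A | (s < m)%N]).
    by rewrite cardsU1 !inE jm ltnn andbF addn1.
  apply/setP => s; rewrite !inE ltnS leq_eqVlt -jm.
  by case: (eqVneq s j) => [->|/negbTE ne_sj]; rewrite ?jA ?eqxx // (inj_eq val_inj) ne_sj.
rewrite addn0; apply: eq_card => s; rewrite !inE ltnS leq_eqVlt.
case sA: (s \in A) => //=; case: eqP => //= sm.
by case/negP: no_m; apply/existsP; exists s; rewrite sA sm eqxx.
Qed.

Lemma nbelow_full u : (2 * n <= u)%N -> nbelow u = #|A|.
Proof. by move=> hu; apply: eq_card => s; rewrite !inE (leq_trans (ltn_ord s) hu) andbT. Qed.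

Lemma negcountE : negcount A = nbelow n.
Proof. by apply: eq_card => j; rewrite !inE bval_lt0. Qed.

Lemma admissibleE : admissible A = [forall i : 'I_n, has_pos (n + i) (+) has_pos (n - i.+1)].
Proof.
apply: eq_forallb => i; congr (_ (+) _); apply: eq_existsb => j.
  by rewrite bval_eq_pos.
by rewrite bval_eq_neg.
Qed.

Lemma sorted_vals_sorted : sorted <=%R (sorted_vals A).
Proof. exact/sort_sorted/le_total. Qed.

Lemma size_sorted_vals : size (sorted_vals A) = #|A|.
Proof. by rewrite size_sort size_map cardE. Qed.

Lemma sorted_valsP v : v \in sorted_vals A -> exists w : 'I_(2 * n), v = bval w.
Proof. by rewrite mem_sort => /mapP [w _ ->]; exists w. Qed.

Lemma count_le_sorted_vals (u : 'I_(2 * n)) :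
  count (<= bval u)%R (sorted_vals A) = nbelow u.+1.
Proof.
rewrite (permP (permEl (perm_sort _ _))) count_map.
rewrite /nbelow cardE /enum_mem size_filter count_filter.
by apply: eq_count => s; rewrite !inE /= ler_bval ltnS andbC.
Qed.

End Positions.

Section Profiles.
Variables n d : nat.
Implicit Types (x y : pelem n d) (K : nat -> nat).

Definition profile x (u : nat) : nat := nbelow x.1 u + (d - x.2).

Lemma le_bd_profile x y : #|x.1| = n -> #|y.1| = n ->
  le_bd x y <-> (forall u, (u <= 2 * n)%N -> (profile y u <= profile x u)%N).
Proof.
move=> card_x card_y.
have [sx sy] := (sorted_vals_sorted x.1, sorted_vals_sorted y.1).
have zx : size (sorted_vals x.1) = n by rewrite size_sorted_vals.
have zy : size (sorted_vals y.1) = n by rewrite size_sorted_vals.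
have [ax ay] : (x.2 <= d)%N /\ (y.2 <= d)%N by split; rewrite -ltnS.
rewrite /profile; split.
- case/andP => deg_le /forallP comp_le [|u] u_le; first by rewrite !nbelow0; lia.
  have shift_le i : (i < n - (y.2 - x.2))%N ->
      (nth 0 (sorted_vals x.1) i <= nth 0 (sorted_vals y.1) (y.2 - x.2 + i))%R.
    move=> i_lt; have /implyP /(_ i_lt) := comp_le (Ordinal (leq_trans i_lt (leq_subr _ _))).
    by rewrite /Defs.comp /= addnS.
  have := count_le_shift sx sy zx zy shift_le (bval (Ordinal u_le)).
  by rewrite !count_le_sorted_vals /=; lia.
- move=> profile_le.
  have deg_le : (x.2 <= y.2)%N by have := profile_le 0%N (leq0n _); rewrite !nbelow0; lia.
  apply/andP; split => //; apply/forallP => i; apply/implyP => i_lt.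
  rewrite /Defs.comp addnS /=.
  apply: (@nth_le_shift _ _ 0%R _ _ _ _ sx sy zx zy) => // _ /sorted_valsP [w ->].
  by rewrite !count_le_sorted_vals; have := profile_le w.+1 (ltn_ord w); lia.
Qed.

Lemma le_bdP x y : inP x -> inP y ->
  le_bd x y <-> (forall u, (u <= 2 * n)%N -> (profile y u <= profile x u)%N).
Proof. by case/andP => /eqP card_x _ /andP [/eqP card_y _]; apply: le_bd_profile. Qed.

Lemma profile_inj x y : (forall u, (u <= 2 * n)%N -> profile x u = profile y u) -> x = y.
Proof.
move=> eq_profile.
have [ax ay] : (x.2 <= d)%N /\ (y.2 <= d)%N by split; rewrite -ltnS.
have eq_deg : x.2 = y.2.
  by apply: val_inj; have := eq_profile 0%N (leq0n _); rewrite /profile !nbelow0 /=; lia.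
have eq_nbelow u : (u <= 2 * n)%N -> nbelow x.1 u = nbelow y.1 u.
  by move=> u_le; have := eq_profile u u_le; rewrite /profile eq_deg; lia.
have eq_set : x.1 = y.1.
  apply/setP => j; rewrite -!has_posE.
  have := eq_nbelow j.+1 (ltn_ord j); rewrite !nbelowS eq_nbelow ?(ltnW (ltn_ord j)) //.
  by case: (has_pos _ _); case: (has_pos _ _) => //=; lia.
by case: x y eq_set eq_deg {eq_profile eq_nbelow ax ay} => [? ?] [? ?] /= -> ->.
Qed.

(* The last clause is admissibility: positions n + i and n - i - 1 carry i + 1 and
   -(i + 1), exactly one of which lies in alpha. *)
Definition is_profile K : Prop :=
  [/\ forall u, (u < 2 * n)%N -> (K u <= K u.+1 <= (K u).+1)%N,
      K (2 * n) = K 0 + n, (K 0 <= d)%N &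
      forall i, (i <= n)%N -> K (n + i) = K (n - i) + i].

Lemma profileP x : inP x -> is_profile (profile x).
Proof.
case/andP => /eqP card_x; rewrite admissibleE => /forallP adm_x; rewrite /profile; split.
- by move=> u _; rewrite nbelowS; case: (has_pos _ _) => /=; lia.
- by rewrite nbelow_full // nbelow0 card_x; lia.
- by rewrite nbelow0; lia.
elim => [|i IH] i_le; first by rewrite !addn0 subn0.
have e : n - i = (n - i.+1).+1 by lia.
move: (IH (ltnW i_le)) (adm_x (Ordinal i_le)); rewrite addnS e !nbelowS /=.
by case: (has_pos _ (n + i)); case: (has_pos _ (n - i.+1)) => //=; lia.
Qed.

Definition of_profile K : pelem n d :=
  ([set u : 'I_(2 * n) | (K u < K u.+1)%N], inord (d - K 0)).

Lemma of_profileK K : is_profile K ->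
  inP (of_profile K) /\ forall u, (u <= 2 * n)%N -> profile (of_profile K) u = K u.
Proof.
case=> K_step K_top K0_le K_sym; set A := (of_profile K).1.
have has_posA u : (u < 2 * n)%N -> has_pos A u = (K u < K u.+1)%N.
  by move=> u_lt; rewrite (has_posE A (Ordinal u_lt)) inE.
have nbelowA u : (u <= 2 * n)%N -> nbelow A u + K 0 = K u.
  elim: u => [|u IH] u_le; first by rewrite nbelow0.
  rewrite nbelowS has_posA //; have := IH (ltnW u_le); have := K_step u u_le.
  by case: ltnP => /=; lia.
have deg : (of_profile K).2 = d - K 0 :> nat by rewrite /= inordK // ltnS leq_subr.
split; last by move=> u u_le; rewrite /profile deg -/A -(nbelowA u u_le); lia.
apply/andP; split.
  by rewrite /in_binom -/A; have := nbelowA _ (leqnn _); rewrite nbelow_full // K_top => ?; apply/eqP; lia.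
rewrite admissibleE; apply/forallP => i; have i_lt : (i < n)%N by [].
rewrite !has_posA; [|lia|lia].
have := K_sym i (ltnW i_lt); have := K_sym i.+1 i_lt.
have := K_step (n + i) ltac:(lia); have := K_step (n - i.+1) ltac:(lia).
have -> : (n - i.+1).+1 = n - i by lia.
rewrite addnS; case: ltnP; case: ltnP => /=; lia.
Qed.

End Profiles.

Section Lattice.
Variables n d : nat.
Implicit Types x y z : pelem n d.

Lemma le_bd_refl x : inP x -> le_bd x x.
Proof. by move=> Px; apply/(le_bdP Px Px). Qed.

Lemma le_bd_anti x y : inP x -> inP y -> le_bd x y -> le_bd y x -> x = y.
Proof.
move=> Px Py /(le_bdP Px Py) le_xy /(le_bdP Py Px) le_yx; apply: profile_inj => u u_le.
by apply/eqP; rewrite eqn_leq le_xy ?le_yx.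
Qed.

Lemma le_bd_trans x y z : inP x -> inP y -> inP z -> le_bd x y -> le_bd y z -> le_bd x z.
Proof.
move=> Px Py Pz /(le_bdP Px Py) le_xy /(le_bdP Py Pz) le_yz; apply/(le_bdP Px Pz) => u u_le.
exact: leq_trans (le_yz u u_le) (le_xy u u_le).
Qed.

Lemma lt_bd_trans x y z : inP x -> inP y -> inP z -> lt_bd x y -> lt_bd y z -> lt_bd x z.
Proof.
move=> Px Py Pz /andP [ne_xy le_xy] /andP [ne_yz le_yz].
rewrite /lt_bd (le_bd_trans Px Py Pz le_xy le_yz) andbT.
apply: contraNneq ne_yz => eq_xz; rewrite eq_xz in le_xy.
by rewrite (le_bd_anti Py Pz le_yz le_xy).
Qed.

Lemma is_profile_max K1 K2 : is_profile n d K1 -> is_profile n d K2 ->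
  is_profile n d (fun u => maxn (K1 u) (K2 u)).
Proof.
case=> a1 a2 a3 a4 [b1 b2 b3 b4]; split; last 3 first.
- by rewrite a2 b2; lia.
- by lia.
- by move=> i i_le; rewrite a4 // b4 //; lia.
by move=> u u_lt; have := a1 u u_lt; have := b1 u u_lt; lia.
Qed.

Lemma is_profile_min K1 K2 : is_profile n d K1 -> is_profile n d K2 ->
  is_profile n d (fun u => minn (K1 u) (K2 u)).
Proof.
case=> a1 a2 a3 a4 [b1 b2 b3 b4]; split; last 3 first.
- by rewrite a2 b2; lia.
- by lia.
- by move=> i i_le; rewrite a4 // b4 //; lia.
by move=> u u_lt; have := a1 u u_lt; have := b1 u u_lt; lia.
Qed.

Definition meet_bd x y : pelem n d :=
  of_profile n d (fun u => maxn (profile x u) (profile y u)).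
Definition join_bd x y : pelem n d :=
  of_profile n d (fun u => minn (profile x u) (profile y u)).

Lemma meet_bdK x y : inP x -> inP y -> inP (meet_bd x y) /\
  forall u, (u <= 2 * n)%N -> profile (meet_bd x y) u = maxn (profile x u) (profile y u).
Proof. by move=> Px Py; apply/of_profileK/is_profile_max; apply: profileP. Qed.

Lemma join_bdK x y : inP x -> inP y -> inP (join_bd x y) /\
  forall u, (u <= 2 * n)%N -> profile (join_bd x y) u = minn (profile x u) (profile y u).
Proof. by move=> Px Py; apply/of_profileK/is_profile_min; apply: profileP. Qed.

Lemma inP_distr_lattice : is_distr_lattice (@inP n d) (@le_bd n d).
Proof.
split; first by split; [exact: le_bd_refl | split; [exact: le_bd_anti | exact: le_bd_trans]].
exists meet_bd, join_bd; split; [|split].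
- move=> x y Px Py; have [Pm Km] := meet_bdK Px Py; split => //.
  + by apply/(le_bdP Pm Px) => u u_le; rewrite Km ?leq_maxl.
  + by apply/(le_bdP Pm Py) => u u_le; rewrite Km ?leq_maxr.
  move=> z Pz /(le_bdP Pz Px) le_zx /(le_bdP Pz Py) le_zy.
  by apply/(le_bdP Pz Pm) => u u_le; rewrite Km // geq_max le_zx ?le_zy.
- move=> x y Px Py; have [Pj Kj] := join_bdK Px Py; split => //.
  + by apply/(le_bdP Px Pj) => u u_le; rewrite Kj ?geq_minl.
  + by apply/(le_bdP Py Pj) => u u_le; rewrite Kj ?geq_minr.
  move=> z Pz /(le_bdP Px Pz) le_xz /(le_bdP Py Pz) le_yz.
  by apply/(le_bdP Pj Pz) => u u_le; rewrite Kj // leq_min le_xz ?le_yz.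
move=> x y z Px Py Pz.
have [Pyz Kyz] := join_bdK Py Pz.
have [Pxy Kxy] := meet_bdK Px Py; have [Pxz Kxz] := meet_bdK Px Pz.
have [_ Kl] := meet_bdK Px Pyz; have [_ Kr] := join_bdK Pxy Pxz.
by apply: profile_inj => u u_le; rewrite Kl // Kr // Kyz // Kxy // Kxz //; lia.
Qed.

End Lattice.

Section SaturatedChain.
Variables (T : finType) (P : pred T) (lt : rel T).
Hypothesis ltxx : irreflexive lt.
Hypothesis lt_trans_in : forall x y z, P x -> P y -> P z -> lt x y -> lt y z -> lt x z.

Definition covers_in x y := [&& P x, P y, lt x y & ~~ [exists z, [&& P z, lt x z & lt z y]]].

Definition cover_within x y : rel T :=
  [rel p q | [&& covers_in p q, (x == p) || lt x p & (q == y) || lt q y]].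

Lemma saturated_chain x y : P x -> P y -> lt x y ->
  exists2 s, path (cover_within x y) x s & last x s = y.
Proof.
have [k] := ubnP #|[set z | [&& P z, lt x z & lt z y]]|.
elim: k x y => // k IH x y; rewrite ltnS => size_between Px Py lt_xy.
have [/existsP [z /and3P [Pz lt_xz lt_zy]] | no_between] :=
  boolP [exists z, [&& P z, lt x z & lt z y]]; last first.
  by exists [:: y]; rewrite //= /cover_within /covers_in /= !eqxx Px Py lt_xy no_between.
have card_left : (#|[set w | [&& P w, lt x w & lt w z]]| < k)%N.
  apply: leq_trans size_between; apply/proper_card/properP; split.
    apply/subsetP => w; rewrite !inE => /and3P [Pw -> lt_wz].
    by rewrite Pw (lt_trans_in Pw Pz Py lt_wz lt_zy).
  by exists z; rewrite !inE ?Pz ?lt_xz ?lt_zy ?ltxx ?andbF.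
have card_right : (#|[set w | [&& P w, lt z w & lt w y]]| < k)%N.
  apply: leq_trans size_between; apply/proper_card/properP; split.
    apply/subsetP => w; rewrite !inE => /and3P [Pw lt_zw ->].
    by rewrite Pw (lt_trans_in Px Pz Pw lt_xz lt_zw).
  by exists z; rewrite !inE ?Pz ?lt_xz ?lt_zy ?ltxx ?andbF.
have [s1 path1 last1] := IH x z card_left Px Pz lt_xz.
have [s2 path2 last2] := IH z y card_right Pz Py lt_zy.
have step_left : subrel (cover_within x z) (cover_within x y).
  move=> p q /and3P [cover_pq le_xp le_qz]; rewrite /cover_within /= cover_pq le_xp /=.
  case/and4P: cover_pq => _ Pq _ _; apply/orP; right.
  by case/orP: le_qz => [/eqP -> //|lt_qz]; apply: lt_trans_in lt_qz lt_zy.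
have step_right : subrel (cover_within z y) (cover_within x y).
  move=> p q /and3P [cover_pq le_zp le_qy]; rewrite /cover_within /= cover_pq le_qy andbT /=.
  case/and4P: cover_pq => Pp _ _ _; apply/orP; right.
  by case/orP: le_zp => [/eqP <- //|lt_zp]; apply: lt_trans_in lt_xz lt_zp.
exists (s1 ++ s2); last by rewrite last_cat last1.
by rewrite cat_path last1 (sub_path step_left path1) (sub_path step_right path2).
Qed.

End SaturatedChain.

Section Doset.
Variables n d : nat.
Implicit Types (x y z p : pelem n d).

Lemma lt_bd_irr : irreflexive (@lt_bd n d).
Proof. by move=> x; rewrite /lt_bd eqxx. Qed.

Definition signature x : nat * nat := (profile x 0, profile x n).

Lemma signature_deg x y : signature x = signature y -> x.2 = y.2.
Proof.
have [ax ay] : (x.2 <= d)%N /\ (y.2 <= d)%N by split; rewrite -ltnS.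
by case=> eq0 _; apply: val_inj; move: eq0; rewrite /profile !nbelow0 /=; lia.
Qed.

Lemma cover_type1E x y : cover_type1 x y = cover_P x y && (signature x == signature y).
Proof.
have [ax ay] : (x.2 <= d)%N /\ (y.2 <= d)%N by split; rewrite -ltnS.
rewrite /cover_type1 /signature xpair_eqE /profile !nbelow0 -!negcountE; congr (_ && _).
have -> : (x.2 == y.2) = (x.2 == y.2 :> nat) by [].
by apply/andP/andP => -[/eqP e1 /eqP e2]; split; apply/eqP; lia.
Qed.

Lemma signature_squeeze x p y : inP x -> inP p -> inP y ->
  le_bd x p -> le_bd p y -> signature x = signature y -> signature p = signature x.
Proof.
move=> Px Pp Py /(le_bdP Px Pp) le_xp /(le_bdP Pp Py) le_py [eq0 eqn].
have squeeze u : (u <= 2 * n)%N -> profile x u = profile y u -> profile p u = profile x u.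
  by move=> u_le eq_u; apply/eqP; rewrite eqn_leq le_xp // eq_u le_py.
by rewrite /signature (squeeze 0%N) ?(squeeze n) //; lia.
Qed.

Lemma path_cover_type1_signature x s : path (@cover_type1 n d) x s ->
  signature (last x s) = signature x.
Proof.
elim: s x => //= y s IH x /andP [step_xy path_ys].
by rewrite IH //; move: step_xy; rewrite cover_type1E => /andP [_ /eqP].
Qed.

Lemma DsetP x y : inP x -> inP y -> le_bd x y -> Dset x y <-> signature x = signature y.
Proof.
move=> Px Py le_xy; split.
  by case=> [[_ <-] // | [_ [s [path_s <-]]]]; rewrite path_cover_type1_signature.
move=> eq_sig; have [<-|ne_xy] := eqVneq x y; first by left.
have lt_xy : lt_bd x y by rewrite /lt_bd ne_xy.
right; split; first by rewrite Px Py lt_xy (signature_deg eq_sig) eqxx.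
have [s path_s last_s] := saturated_chain (@lt_bd_irr) (@lt_bd_trans n d) Px Py lt_xy.
exists s; split => //; apply: sub_path path_s => p q /and3P [cover_pq le_xp le_qy].
have /and4P [Pp Pq /andP [_ le_pq] _] := cover_pq.
have le_bd_of_le (a b : pelem n d) : inP a -> (a == b) || lt_bd a b -> le_bd a b.
  by move=> Pa /orP [/eqP <-|/andP [_ //]]; apply: le_bd_refl.
have {}le_xp := le_bd_of_le _ _ Px le_xp; have {}le_qy := le_bd_of_le _ _ Pq le_qy.
have sig_p := signature_squeeze Px Pp Py le_xp (le_bd_trans Pp Pq Py le_pq le_qy) eq_sig.
have sig_q := signature_squeeze Px Pq Py (le_bd_trans Px Pp Pq le_xp le_pq) le_qy eq_sig.
by rewrite cover_type1E sig_p sig_q eqxx andbT.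
Qed.

Lemma Dset_doset : is_doset (@inP n d) (@le_bd n d) (@Dset n d).
Proof.
split; first by move=> x Px; left.
split.
  move=> x y [[Px <-] | [/and4P [Px Py _ /andP [_ le_xy]] _]]; last by [].
  by split => //; apply: le_bd_refl.
move=> x y z Px Py Pz le_xy le_yz.
have le_xz := le_bd_trans Px Py Pz le_xy le_yz.
split => [/(DsetP Px Pz le_xz) eq_xz | [/(DsetP Px Py le_xy) eq_xy /(DsetP Py Pz le_yz) eq_yz]].
  have eq_yx := signature_squeeze Px Py Pz le_xy le_yz eq_xz.
  by split; [apply/(DsetP Px Py le_xy) | apply/(DsetP Py Pz le_yz)]; rewrite eq_yx.
by apply/(DsetP Px Pz le_xz); rewrite eq_xy.
Qed.

End Doset.

Theorem proposition3p16 (n d : nat) : (1 <= n)%N ->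
  is_doset (@inP n d) (@le_bd n d) (@Dset n d) /\
  is_distr_lattice (@inP n d) (@le_bd n d).
Proof. by move=> _; split; [exact: Dset_doset | exact: inP_distr_lattice]. Qed.
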